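(* Let $L=\{\ell_1,\dots,\ell_n\}$, $R=\{r_1,\dots,r_d\}$ and let $T_1,T_2$ be two compatible spanning trees of the complete bipartite graph on $L\sqcup R$ with right degree vectors $v$ and $v+e_p-e_q$ respectively. If $(\ell_s,r_p)$ is an edge of $T_1$, then it is also an edge of $T_2$. Furthermore, the degree of $\ell_s$ in $T_1$ is greater than or equal to its degree in $T_2$.
   Context: Graphs are identified with edge sets; right degree vector $=(\deg r_1,\dots,\deg r_d)$; $e_p$ is a standard unit vector. Two graphs are compatible if for all $J\subseteq L$, $I\subseteq R$ such that both contain a perfect matching between $J$ and $I$ (as subgraphs), these perfect matchings are equal. *)

From mathcomp Require Import all_boot.
Set Implicit Arguments. Unset Strict Implicit. Unset Printing Implicit Defensive.

(* A subgraph of K_{n,d} is identified with its edge set,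
   a set of pairs (i, j) meaning the edge (l_i, r_j). *)
Definition bvert (n d : nat) : finType := ('I_n + 'I_d)%type.
Definition bgraph (n d : nat) := {set 'I_n * 'I_d}.

Definition badj n d (G : bgraph n d) : rel (bvert n d) :=
  fun u v => match u, v with
             | inl i, inr j => (i, j) \in G
             | inr j, inl i => (i, j) \in G
             | _, _ => false
             end.

Definition bconnected n d (G : bgraph n d) : Prop :=
  forall u v : bvert n d, connect (badj G) u v.

Definition bacyclic n d (G : bgraph n d) : Prop :=
  forall c : seq (bvert n d), uniq c -> 2 < size c -> ~~ cycle (badj G) c.

Definition spanning_tree n d (G : bgraph n d) : Prop :=
  bconnected G /\ bacyclic G.

Definition ldeg n d (G : bgraph n d) (i : 'I_n) : nat := #|[set j | (i, j) \in G]|.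
Definition rdeg n d (G : bgraph n d) (j : 'I_d) : nat := #|[set i | (i, j) \in G]|.

Definition perfect_matching_in n d (G : bgraph n d) (J : {set 'I_n}) (I : {set 'I_d})
  (M : bgraph n d) : Prop :=
  [/\ M \subset G,
      (forall e, e \in M -> e.1 \in J /\ e.2 \in I),
      (forall i, i \in J -> #|[set j | (i, j) \in M]| = 1) &
      (forall j, j \in I -> #|[set i | (i, j) \in M]| = 1)].

Definition compatible n d (G1 G2 : bgraph n d) : Prop :=
  forall (J : {set 'I_n}) (I : {set 'I_d}) (M1 M2 : bgraph n d),
    perfect_matching_in G1 J I M1 -> perfect_matching_in G2 J I M2 -> M1 = M2.

(* Root a spanning tree at a right vertex r; each left vertex i then has a parent
   lpar i in R, and the fibre of lpar over j has rdeg j - [j != r] elements.  The degree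
   hypothesis therefore gives the parent maps of T1 (rooted at p) and T2 (rooted at q)
   fibres of equal sizes.  Two maps L -> R with graphs in T1 and T2 and equal fibre sizes
   must coincide: otherwise, on the left vertices where they disagree, they produce an
   alternating cycle, i.e. distinct perfect matchings of T1 and T2 between the same J
   and I, against compatibility.  Since p is the root of T1, lpar s = p, whence
   (s, p) is in T2.  If (s, j) were in T2 but not in T1, climbing from j towards p in T1
   until a neighbour of s is reached yields, with the common parent map and the edge
   (s, j), a second such alternating cycle; so N_T2(s) is contained in N_T1(s). *)

From mathcomp Require Import all_boot zify.
Set Implicit Arguments. Unset Strict Implicit. Unset Printing Implicit Defensive.

Lemma invariant_subset_injective (T : finType) (f : T -> T) (A : {set T}) :
  A != set0 -> f @: A \subset A ->
  exists S : {set T}, [/\ S \subset A, S != set0, f @: S \subset S & {in S &, injective f}].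
Proof.
have [m] := ubnP #|A|; elim: m A => // m IH A ltAm nzA fA.
have [injf | ninjf] := @imset_injP _ _ f A; first by exists A.
have ltfA : #|f @: A| < #|A|.
  by rewrite ltn_neqAle leq_imset_card andbT; apply/negP => /imset_injP/ninjf.
have [|||S [sSfA nzS fS injS]] := IH (f @: A); first by lia.
- by rewrite imset_eq0.
- exact: imsetS.
by exists S; split=> //; apply: subset_trans fA.
Qed.

Section Matchings.
Variables (n d : nat).
Implicit Types (G : bgraph n d) (I : {set 'I_d}).

Lemma imset_perfect_matching G I (c : 'I_d -> 'I_n) (h : 'I_d -> 'I_d) :
  {in I &, injective c} -> {in I &, injective h} -> h @: I = I ->
  {in I, forall x, (c x, h x) \in G} ->
  perfect_matching_in G (c @: I) I [set (c x, h x) | x in I].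
Proof.
move=> injc injh hI cG; split.
- by apply/subsetP => _ /imsetP[x Ix ->]; apply: cG.
- by move=> _ /imsetP[x Ix ->]; split; rewrite /= ?imset_f // -hI imset_f.
- move=> _ /imsetP[x Ix ->]; rewrite -(cards1 (h x)); apply: eq_card => j.
  rewrite !inE; apply/imsetP/eqP => [[y Iy [/injc-> // ->]]|->]; last by exists x.
- move=> j; rewrite -{1}hI => /imsetP[x Ix ->].
  rewrite -(cards1 (c x)); apply: eq_card => i.
  rewrite !inE; apply/imsetP/eqP => [[y Iy [-> /injh->]]|->] //; last by exists x.
Qed.

Lemma compatible_fixed (T1 T2 : bgraph n d) I (c : 'I_d -> 'I_n) (g : 'I_n -> 'I_d) :
  compatible T1 T2 ->
  {in I, forall x, (c x, x) \in T1} -> {in I, forall x, (c x, g (c x)) \in T2} ->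
  (g \o c) @: I \subset I -> {in I &, injective (g \o c)} ->
  {in I, forall x, g (c x) = x}.
Proof.
move=> compT cT1 cT2 gcI injgc x Ix.
have injc : {in I &, injective c} by move=> y z Iy Iz /= yz; apply: injgc => //=; rewrite yz.
have gcIE : (g \o c) @: I = I by apply/eqP; rewrite eqEcard gcI (card_in_imset injgc) leqnn.
have M1 := imset_perfect_matching (h := id) injc (in2W (@inj_id _)) (imset_id I) cT1.
have M2 := imset_perfect_matching injc injgc gcIE cT2.
have /imsetP[y Iy [cxy xE]] : (c x, x) \in [set (c y, g (c y)) | y in I].
  by rewrite -(compT _ _ _ _ M1 M2); apply/imsetP; exists x.
by rewrite {2}xE (injc _ _ Ix Iy cxy).
Qed.

Lemma compatible_graph_eq (T1 T2 : bgraph n d) (f g : 'I_n -> 'I_d) :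
  compatible T1 T2 -> (forall i, (i, f i) \in T1) -> (forall i, (i, g i) \in T2) ->
  (forall j : 'I_d, #|[set i | f i == j]| = #|[set i | g i == j]|) -> f =1 g.
Proof.
move=> compT fT1 gT2 fgfib i0; apply/eqP/negPn/negP => fgi0.
set B := [set i | f i != g i].
have fibB j : #|[set i | f i == j] :&: B| = #|[set i | g i == j] :&: B|.
  have offB : [set i | f i == j] :\: B = [set i | g i == j] :\: B.
    by apply/setP => i; rewrite !inE negbK; case: eqP => [->|].
  have := fgfib j; rewrite -(cardsID B [set i | f i == j]) -(cardsID B [set i | g i == j]).
  by rewrite offB => /eqP; rewrite eqn_add2r => /eqP.
have imB h j : (j \in h @: B) = (0 < #|[set i | h i == j] :&: B|).
  rewrite card_gt0; apply/imsetP/set0Pn => [[i Bi ->]|[i]].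
    by exists i; rewrite in_setI Bi inE eqxx.
  by rewrite in_setI inE => /andP[/eqP<- Bi]; exists i.
have fgB : f @: B = g @: B by apply/setP => j; rewrite !imB fibB.
(* j |-> g (c j) maps f(B) = g(B) into itself; where it is injective, compatible_fixed
   forces g (c j) = j = f (c j), impossible as c j lies in the disagreement set B. *)
pose c j := odflt i0 [pick i in B | f i == j].
have cB j : j \in f @: B -> c j \in B /\ f (c j) = j.
  case/imsetP=> i Bi ->; rewrite /c; case: pickP => [k /andP[Bk /eqP fk] | /(_ i)] //.
  by rewrite Bi eqxx.
have nzfB : f @: B != set0 by rewrite imset_eq0; apply/set0Pn; exists i0; rewrite inE.
have gcfB : (g \o c) @: (f @: B) \subset f @: B.
  by apply/subsetP => _ /imsetP[j /cB[Bc _] ->]; rewrite /= fgB imset_f.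
have [S [SfB nzS gcS injS]] := invariant_subset_injective nzfB gcfB.
have [x Sx] := set0Pn _ nzS.
have [Bcx fcx] := cB x (subsetP SfB x Sx).
have cT1 : {in S, forall y, (c y, y) \in T1}.
  by move=> y /(subsetP SfB)/cB[_ fcy]; rewrite -{2}fcy fT1.
have gcx := compatible_fixed compT cT1 (fun y _ => gT2 (c y)) gcS injS Sx.
by move: Bcx; rewrite inE fcx gcx eqxx.
Qed.

End Matchings.

Section RootedTree.
Variables (V : finType) (e : rel V) (side : V -> bool).
Hypothesis e_sym : symmetric e.
Hypothesis e_side : forall u v, e u v -> side u != side v.
Hypothesis e_conn : forall u v, connect e u v.
Hypothesis e_acyclic : forall c : seq V, uniq c -> 2 < size c -> ~~ cycle e c.
Variable r : V.

Fixpoint ball k v :=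
  if k is k'.+1 then ball k' v || [exists u, ball k' u && e u v] else v == r.

Lemma ball_last_path c : path e r c -> ball (size c) (last r c).
Proof.
elim/last_ind: c => [|c x IHc] /=; first by rewrite eqxx.
rewrite rcons_path size_rcons last_rcons => /andP[/IHc rc cx] /=.
by apply/orP; right; apply/existsP; exists (last r c); rewrite rc.
Qed.

Lemma ball_exists v : exists k, ball k v.
Proof. by have /connectP[c rc ->] := e_conn r v; exists (size c); apply: ball_last_path. Qed.

Definition depth v := ex_minn (ball_exists v).

Lemma ball_depth v : ball (depth v) v.
Proof. by rewrite /depth; case: ex_minnP. Qed.

Lemma depth_min v k : ball k v -> depth v <= k.
Proof. by rewrite /depth; case: ex_minnP => m _ min_m /min_m. Qed.

Lemma depth_eq0 v : (depth v == 0) = (v == r).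
Proof.
apply/eqP/eqP => [dv0|->]; last by apply/eqP; rewrite -leqn0 depth_min //= eqxx.
by have := ball_depth v; rewrite dv0 => /eqP.
Qed.

Lemma depth_edge u v : e u v -> depth v <= (depth u).+1.
Proof.
by move=> uv; apply: depth_min => /=; apply/orP; right; apply/existsP; exists u; rewrite ball_depth.
Qed.

Lemma depth_parent_exists v : v != r -> exists2 u, e u v & (depth u).+1 = depth v.
Proof.
move=> vr; have := ball_depth v; case dv: (depth v) => [|k] /=.
  by move: vr; rewrite -depth_eq0 dv.
case/orP => [/depth_min|/existsP[u /andP[bu uv]]]; first by rewrite dv; lia.
by exists u => //; have := depth_min bu; have := depth_edge uv; rewrite dv; lia.
Qed.

Lemma side_depth v : side v = side r (+) odd (depth v).
Proof.
move dv: (depth v) => k; elim: k v dv => [|k IHk] v dv.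
  by move/eqP: dv; rewrite depth_eq0 => /eqP->; case: (side r).
have vr : v != r by rewrite -depth_eq0 dv.
have [u uv du] := depth_parent_exists vr.
have := e_side uv; rewrite (IHk u); last by lia.
by rewrite /=; case: (side v) (side r) (odd k) => [] [] [].
Qed.

Lemma depth_adj u v : e u v -> (depth u).+1 = depth v \/ (depth v).+1 = depth u.
Proof.
move=> uv; have := depth_edge uv; rewrite e_sym in uv; have := depth_edge uv.
have : depth u != depth v.
  by apply: contra (e_side uv); rewrite (side_depth u) (side_depth v) => /eqP->.
lia.
Qed.

Definition par v :=
  if v == r then r else odflt r [pick u | e u v && ((depth u).+1 == depth v)].

Lemma parP v : v != r -> e (par v) v /\ (depth (par v)).+1 = depth v.
Proof.
move=> vr; rewrite /par (negbTE vr); case: pickP => [u /andP[uv /eqP du] // | none].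
by have [u uv du] := depth_parent_exists vr; have := none u; rewrite uv du eqxx.
Qed.

Lemma depth_iter_par t u : t <= depth u -> depth (iter t par u) = depth u - t.
Proof.
elim: t => [|t IHt] tu; first by rewrite subn0.
have IHt' := IHt (ltnW tu).
have tur : iter t par u != r by rewrite -depth_eq0 IHt'; lia.
have [_ dpar] := parP tur.
by rewrite iterS; lia.
Qed.

Lemma iter_depth_par u : iter (depth u) par u = r.
Proof. by apply/eqP; rewrite -depth_eq0 depth_iter_par // subnn. Qed.

Lemma path_traject_par x k : k <= depth x -> path e x (traject par (par x) k).
Proof.
elim: k x => [//|k IHk] x kx /=.
have xr : x != r by rewrite -depth_eq0; lia.
have [xpar dpar] := parP xr.
by rewrite e_sym xpar IHk //; lia.
Qed.

Lemma uniq_traject_par x k : k <= depth x -> uniq (traject par x k.+1).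
Proof.
move=> kx; rewrite looping_uniq; apply/negP => /trajectP[i ik iE].
by have := depth_iter_par kx; rewrite iE depth_iter_par; lia.
Qed.

Lemma path_rev_belast x p : path e (last x p) (rev (belast x p)) = path e x p.
Proof. by rewrite rev_path; apply: eq_path => a b; apply: e_sym. Qed.

Lemma par_unique u u' v : e u v -> e u' v ->
  (depth u).+1 = depth v -> (depth u').+1 = depth v -> u = u'.
Proof.
move=> uv u'v du du'; apply/eqP/negPn/negP => uu'.
have meet : exists m, iter m par u == iter m par u'.
  by exists (depth u); rewrite iter_depth_par (_ : depth u = depth u') ?iter_depth_par //; lia.
case: (ex_minnP meet) => [[/= /eqP uu'E|m /eqP um min_m]]; first by rewrite uu'E eqxx in uu'.
have mu : m.+1 <= depth u.
  by apply: min_m; rewrite iter_depth_par (_ : depth u = depth u') ?iter_depth_par //; lia.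
have depth_tr x i : x \in [:: u; u'] -> i <= m.+1 -> depth (iter i par x) = depth u - i.
  by rewrite !inE => /orP[] /eqP-> im; rewrite depth_iter_par; lia.
have path_tr x : x \in [:: u; u'] -> e x v -> path e v (traject par x m.+2).
  move=> xuu' xv; rewrite trajectS -cat1s cat_path; apply/andP; split.
    by rewrite /= e_sym xv.
  apply: (path_traject_par (x := x)).
  by move: xuu'; rewrite !inE => /orP[] /eqP->; lia.
apply: (negP (e_acyclic (c := v :: traject par u m.+2 ++ rev (traject par u' m.+1)) _ _)).
- rewrite cons_uniq cat_uniq rev_uniq !uniq_traject_par ?andbT; try lia.
  apply/andP; split.
    rewrite mem_cat mem_rev; apply/norP; split; apply/negP => /trajectP[i im vE];
    by have := congr1 depth vE; rewrite depth_tr ?inE ?eqxx ?orbT; lia.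
  apply/hasPn => y; rewrite mem_rev => /trajectP[i' im' ->].
  apply/negP => /trajectP[i im iE]; have := congr1 depth iE.
  rewrite !depth_tr ?inE ?eqxx ?orbT; try lia.
  move=> ii'; have := min_m i'; rewrite iE (_ : i = i'); last by lia.
  by rewrite eqxx; lia.
- by rewrite /= size_cat size_rev !size_traject.
have lastE x : last v (traject par x m.+2) = iter m.+1 par x.
  by rewrite trajectS last_cons last_traject.
have belastE x : belast v (traject par x m.+2) = v :: traject par x m.+1.
  by rewrite trajectSr belast_rcons.
rewrite /cycle rcons_cat cat_path path_tr ?inE ?eqxx // -rev_cons.
by rewrite lastE um -lastE -belastE path_rev_belast path_tr // !inE eqxx orbT.
Qed.

Lemma edge_par u v : e u v -> (v != r /\ par v = u) \/ (u != r /\ par u = v).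
Proof.
move=> uv; have [du|dv] := depth_adj uv.
  have vr : v != r by rewrite -depth_eq0 -du.
  have [pv dpv] := parP vr; left; split => //; apply: par_unique pv uv _ _; lia.
rewrite e_sym in uv; have ur : u != r by rewrite -depth_eq0 -dv.
have [pu dpu] := parP ur; right; split => //; apply: par_unique pu uv _ _; lia.
Qed.

End RootedTree.

Definition bside n d (v : bvert n d) : bool := if v is inl _ then true else false.

Lemma badj_sym n d (G : bgraph n d) : symmetric (badj G).
Proof. by case=> [i|j] [i'|j']. Qed.

Lemma badj_side n d (G : bgraph n d) u v : badj G u v -> bside u != bside v.
Proof. by case: u v => [i|j] [i'|j']. Qed.

Section RootedSpanningTree.
Variables (n d : nat) (T : bgraph n d) (p0 : 'I_d).
Hypothesis treeT : spanning_tree T.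

Local Notation L i := (inl i : bvert n d).
Local Notation R x := (inr x : bvert n d).
Local Notation root := (R p0).
Local Notation D := (depth (proj1 treeT) root).
Local Notation P := (par (proj1 treeT) root).

Lemma parT v : v != root -> badj T (P v) v /\ (D (P v)).+1 = D v.
Proof. exact: parP. Qed.

Lemma edge_parT u v : badj T u v -> (v != root /\ P v = u) \/ (u != root /\ P u = v).
Proof. exact: edge_par (@badj_sym n d T) (@badj_side n d T) _ (proj2 treeT) root u v. Qed.

Definition lpar (i : 'I_n) : 'I_d := if P (L i) is inr j then j else p0.

Lemma par_inl (i : 'I_n) : P (L i) = inr (lpar i).
Proof. by have [] := parT (v := L i) isT; rewrite /lpar; case: (P (L i)). Qed.

Lemma lpar_edge (i : 'I_n) : (i, lpar i) \in T.
Proof. by have [] := parT (v := L i) isT; rewrite par_inl. Qed.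

Lemma depth_lpar (i : 'I_n) : (D (R (lpar i))).+1 = D (L i).
Proof. by have [] := parT (v := L i) isT; rewrite par_inl. Qed.

Lemma lpar_root (i : 'I_n) : (i, p0) \in T -> lpar i = p0.
Proof.
move=> ip0; case: (edge_parT (u := L i) (v := root) ip0) => -[]; first by rewrite eqxx.
by rewrite par_inl => _ [].
Qed.

Definition rpar (i0 : 'I_n) (x : 'I_d) : 'I_n := if P (R x) is inl i then i else i0.

Lemma par_inr (i0 : 'I_n) (x : 'I_d) : x != p0 -> P (R x) = inl (rpar i0 x).
Proof.
move=> xp0; have /parT[] : R x != root by apply: contraNneq xp0 => -[->].
by rewrite /rpar; case: (P (R x)).
Qed.

Lemma rpar_edge (i0 : 'I_n) (x : 'I_d) : x != p0 -> (rpar i0 x, x) \in T.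
Proof.
move=> xp0; have /parT[] : R x != root by apply: contraNneq xp0 => -[->].
by rewrite (par_inr i0 xp0).
Qed.

Lemma depth_rpar (i0 : 'I_n) (x : 'I_d) : x != p0 -> (D (L (rpar i0 x))).+1 = D (R x).
Proof.
move=> xp0; have /parT[] : R x != root by apply: contraNneq xp0 => -[->].
by rewrite (par_inr i0 xp0).
Qed.

Lemma rdeg_lpar (j : 'I_d) : #|[set i | lpar i == j]| + (j != p0) = rdeg T j.
Proof.
rewrite /rdeg; have [->|jp0] := eqVneq j p0.
  rewrite addn0; apply: eq_card => i; rewrite !inE.
  by apply/eqP/idP => [<-|/lpar_root//]; apply: lpar_edge.
have [k Ek] : exists k, P (R j) = L k.
  have /parT[] : R j != root by apply: contraNneq jp0 => -[->].
  by case: (P (R j)) => [k _ _|//]; exists k.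
have rpar_k : rpar k j = k by rewrite /rpar Ek.
have := depth_rpar k jp0; have := rpar_edge k jp0; rewrite rpar_k => kj dk.
have -> : [set i | (i, j) \in T] = k |: [set i | lpar i == j].
  apply/setP => i; rewrite !inE; apply/idP/orP => [ij|[/eqP-> // | /eqP<-]]; last exact: lpar_edge.
  case: (edge_parT (u := L i) (v := R j) ij) => -[_].
    by rewrite Ek => -[->]; left.
  by rewrite par_inl => -[->]; right.
have kj' : k \notin [set i | lpar i == j].
  by rewrite inE; apply/eqP => kj'; have := depth_lpar k; rewrite kj'; lia.
by rewrite cardsU1 kj' addnC.
Qed.

Section Ascent.
Variables (s : 'I_n) (j : 'I_d).
Hypothesis sp0 : (s, p0) \in T.

Definition ascent u := iter u (fun x => lpar (rpar s x)) j.

Lemma depth_ascent u : (forall v, v < u -> (s, ascent v) \notin T) ->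
  D (R (ascent u)) + 2 * u = D (R j).
Proof.
elim: u => [|u IHu] free; first by rewrite addn0.
have up0 : ascent u != p0 by apply: contraNneq (free u (ltnSn u)) => ->.
have := depth_rpar s up0; have := depth_lpar (rpar s (ascent u)).
rewrite -(IHu (fun v vu => free v (ltnW vu))) /ascent iterS -/(ascent u).
lia.
Qed.

Lemma ascent_stops : exists u, (s, ascent u) \in T.
Proof.
have [[u su]|none] := pickP (fun u : 'I_(D (R j)).+1 => (s, ascent u) \in T).
  by exists u.
have := @depth_ascent (D (R j)).+1 (fun v vlt => negbT (none (Ordinal vlt))); lia.
Qed.

Definition ascent_len := ex_minn ascent_stops.
Local Notation t := ascent_len.

Lemma ascent_len_stops : (s, ascent t) \in T.
Proof. by rewrite /ascent_len; case: ex_minnP. Qed.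

Lemma ascent_free u : u < t -> (s, ascent u) \notin T.
Proof. by rewrite /ascent_len; case: ex_minnP => m _ min_m um; apply/negP => /min_m; lia. Qed.

Lemma ascent_inj u v : u <= t -> v <= t -> ascent u = ascent v -> u = v.
Proof.
have free w : w <= t -> forall w', w' < w -> (s, ascent w') \notin T.
  by move=> wt w' w'w; apply: ascent_free; lia.
move=> ut vt uv; have := depth_ascent (free u ut); have := depth_ascent (free v vt).
by rewrite uv; lia.
Qed.

Lemma ascent_ord_inj : injective (fun i : 'I_t.+1 => ascent i).
Proof. by move=> i k /ascent_inj ik; apply/val_inj/ik; rewrite -ltnS. Qed.

(* On the ascent, mate1 matches each right vertex to its T-parent (or to s at the top),
   and mate2 \o mate1 then shifts it to the next right vertex via a T2-edge, cyclically. *)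
Definition mate1 x := if (s, x) \in T then s else rpar s x.
Definition mate2 i := if i == s then j else lpar i.

Lemma mate1_edge x : (mate1 x, x) \in T.
Proof.
rewrite /mate1; case: ifPn => // sxT; apply: rpar_edge.
by apply: contraNneq sxT => ->.
Qed.

Lemma mate_ascent (i : 'I_t.+1) : mate2 (mate1 (ascent i)) = ascent (ordS i).
Proof.
have [it | ti] := ltnP i t.
  have free := ascent_free it; rewrite /mate1 /mate2 (negbTE free) /= modn_small //.
  case: eqP => [rs | _]; last by rewrite /ascent iterS.
  have ip0 : ascent i != p0 by apply: contraNneq free => ->.
  by have := rpar_edge s ip0; rewrite rs (negbTE free).
have -> : i = ord_max by apply/val_inj; apply/eqP; rewrite eqn_leq ti -ltnS ltn_ord.
by rewrite /mate1 /mate2 /= ascent_len_stops eqxx modnn.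
Qed.

Lemma compatible_lpar_edge (T2 : bgraph n d) : compatible T T2 -> (forall i, (i, lpar i) \in T2) ->
  (s, j) \in T2 -> (s, j) \in T.
Proof.
move=> compT lparT2 sjT2; apply/idPn => sjT.
have t_gt0 : 0 < t.
  by rewrite lt0n; apply: contraNneq sjT => t0; have := ascent_len_stops; rewrite t0.
have mate2_edge i : (i, mate2 i) \in T2 by rewrite /mate2; case: eqP => [->|].
pose I := [set ascent i | i : 'I_t.+1].
have mateI : (mate2 \o mate1) @: I \subset I.
  apply/subsetP => _ /imsetP[_ /imsetP[i _ ->] ->].
  by rewrite /= mate_ascent; apply/imsetP; exists (ordS i).
have mate_inj : {in I &, injective (mate2 \o mate1)}.
  move=> _ _ /imsetP[i _ ->] /imsetP[k _ ->] /=; rewrite !mate_ascent.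
  by move=> /ascent_ord_inj/ordS_inj->.
have I0 : ascent (ord0 : 'I_t.+1) \in I by apply/imsetP; exists ord0.
have := compatible_fixed compT (fun x _ => mate1_edge x) (fun x _ => mate2_edge (mate1 x)).
move=> /(_ I mateI mate_inj _ I0); rewrite mate_ascent => /ascent_ord_inj/(congr1 val).
by rewrite /= modn_small.
Qed.

End Ascent.
End RootedSpanningTree.

Theorem lemma2p11 (n d : nat) (T1 T2 : bgraph n d) (p q : 'I_d) (s : 'I_n) :
  spanning_tree T1 -> spanning_tree T2 -> compatible T1 T2 ->
  (* right degree vectors v and v + e_p - e_q *)
  (forall j : 'I_d, rdeg T2 j + (j == q) = rdeg T1 j + (j == p)) ->
  (s, p) \in T1 ->
  (s, p) \in T2 /\ ldeg T1 s >= ldeg T2 s.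
Proof.
move=> tree1 tree2 compT rdegE sp1.
have lparE : lpar p tree1 =1 lpar q tree2.
  apply: compatible_graph_eq compT (lpar_edge p tree1) (lpar_edge q tree2) _ => j.
  have := rdegE j; rewrite -(rdeg_lpar p tree1) -(rdeg_lpar q tree2).
  by case: (j == p); case: (j == q) => /=; lia.
have lpar_s : lpar p tree1 s = p by apply: lpar_root.
split; first by rewrite -lpar_s lparE lpar_edge.
apply/subset_leq_card/subsetP => j; rewrite !inE.
apply: (compatible_lpar_edge sp1 compT) => i.
by rewrite lparE lpar_edge.
Qed.
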